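(* Let $\alpha>0$, let $G$ be a standard normal random variable and let $G_\alpha:=\operatorname{sgn}(G)|G|^{2/\alpha}$. Then $\|G_\alpha\|_{\psi_\alpha}=(8/3)^{1/\alpha}$.
   Context: For a random variable $X$ and $\alpha>0$, $\|X\|_{\psi_\alpha}:=\inf\{K>0:\ \mathbb{E}\exp(|X/K|^\alpha)\le 2\}$ (with $\inf\emptyset=\infty$). $\operatorname{sgn}$ denotes the signum function. *)

From HB Require Import structures.
From mathcomp Require Import all_boot all_order all_algebra.
From mathcomp Require Import all_classical all_reals all_analysis.
Set Implicit Arguments. Unset Strict Implicit. Unset Printing Implicit Defensive.
Import Order.TTheory GRing.Theory Num.Theory.
Local Open Scope classical_set_scope.
Local Open Scope ring_scope.

(* The expectation is the (extended-real) integral of a nonnegative function,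
   hence always defined (possibly +oo). *)
Definition psi_norm {d : measure_display} {T : measurableType d} {R : realType}
  (P : probability T R) (alpha : R) (X : T -> R) : \bar R :=
  ereal_inf [set K%:E | K in
    [set K : R | 0 < K /\ ('E_P[(fun w => expR (`|X w / K| `^ alpha))%R] <= 2%:E)%E]].

Definition is_standard_normal {d : measure_display} {T : measurableType d}
  {R : realType} (P : probability T R) (G : {RV P >-> R}) : Prop :=
  forall A : set R, measurable A -> distribution P G A = normal_prob 0 1 A.

(* Since |G_alpha / K|^alpha = G^2 / K^alpha, the Orlicz condition reads
   E exp(t G^2) <= 2 with t = K^-alpha.  Completing the square in the Gaussian
   density gives E exp(t G^2) = (1 - 2t)^(-1/2) for t < 1/2, which is at most 2
   exactly when t <= 3/8; for larger t, monotonicity in t keeps the expectation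
   above 2.  So the admissible K are those with K^alpha >= 8/3. *)

From HB Require Import structures.
From mathcomp Require Import all_boot all_order all_algebra.
From mathcomp Require Import all_classical all_reals all_analysis.
From mathcomp Require Import measurable_realfun ring lra.
Import Order.TTheory GRing.Theory Num.Theory.
Local Open Scope classical_set_scope.
Local Open Scope ring_scope.

Lemma expR_mul_sqr_normal_pdf (R : realType) (t x : R) : t < 2^-1 ->
  expR (t * x ^+ 2) * normal_pdf 0 1 x =
  Num.sqrt (1 - 2 * t)^-1 * normal_pdf 0 (Num.sqrt (1 - 2 * t)^-1) x.
Proof.
move=> t_lt; have t_pos : 0 < 1 - 2 * t by lra.
set s := Num.sqrt _.
have s_gt0 : 0 < s by rewrite sqrtr_gt0 invr_gt0.
have s2 : s ^+ 2 = (1 - 2 * t)^-1 by rewrite sqr_sqrtr // invr_ge0 ltW.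
rewrite !normal_pdfE ?oner_neq0 ?gt_eqF //.
rewrite /normal_peak /normal_fun !subr0 expr1n mul1r s2.
rewrite -mulrnAr sqrtrM ?invr_ge0 ?ltW // -/s invfM.
rewrite [RHS]mulrA [s * _]mulrA mulfV ?gt_eqF // mul1r mulrCA -expRD.
by congr (_ * expR _); field; rewrite gt_eqF.
Qed.

Lemma normr_sgr_powR_div_powR (R : realType) (alpha K x : R) :
  0 < alpha -> 0 < K ->
  `|Num.sg x * `|x| `^ (2 / alpha) / K| `^ alpha = (K `^ alpha)^-1 * x ^+ 2.
Proof.
move=> alpha_gt0 K_gt0.
have -> : `|Num.sg x * `|x| `^ (2 / alpha) / K| = `|x| `^ (2 / alpha) / K.
  have [->|x_neq0] := eqVneq x 0.
    by rewrite sgr0 normr0 powR0 ?mul0r ?normr0 // mulf_neq0 // invr_eq0 gt_eqF.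
  rewrite !normrM normr_sg x_neq0 mul1r ger0_norm ?powR_ge0 //.
  by rewrite ger0_norm // invr_ge0 ltW.
have Kalpha_gt0 : 0 < K `^ alpha by rewrite powR_gt0.
suff <- : (`|x| `^ (2 / alpha) / K) `^ alpha * K `^ alpha = x ^+ 2.
  by rewrite [RHS]mulrC mulfK ?gt_eqF.
rewrite -powRM ?divr_ge0 ?powR_ge0 ?ltW // divfK ?gt_eqF //.
by rewrite -powRrM divfK ?gt_eqF // powR_mulrn // real_normK // num_real.
Qed.

Lemma sqrtr_inv_1B2M_le2 (R : realType) (t : R) : t < 2^-1 ->
  (Num.sqrt (1 - 2 * t)^-1 <= 2) = (t <= 3 / 8).
Proof.
move=> t_lt; have t_pos : 0 < 1 - 2 * t by lra.
have sqrt4 : Num.sqrt 4 = 2 :> R.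
  by rewrite (_ : 4 = 2 ^+ 2) ?sqrtr_sqr ?ger0_norm // expr2 -natrM.
rewrite -[leRHS]sqrt4 ler_sqrt // invf_ple ?posrE //.
apply/idP/idP => ?; lra.
Qed.

Section normal_gaussian_moment.
Context {R : realType}.
Local Open Scope ereal_scope.

Lemma ge0_integral_normal_prob (m s : R) (f : R -> \bar R) :
  (forall x, 0 <= f x) -> measurable_fun [set: R] f ->
  \int[normal_prob m s]_x f x =
  \int[lebesgue_measure]_x (f x * (normal_pdf m s x)%:E).
Proof.
move=> f0 mf; have dom := normal_prob_dominates m s.
have intRN := Radon_Nikodym_SigmaFinite.f_integrable dom.
have mpdf : measurable_fun [set: R] (fun x => (normal_pdf m s x)%:E).
  by apply/measurable_EFinP; exact: measurable_normal_pdf.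
rewrite -(Radon_Nikodym_SigmaFinite.change_of_variables dom f0 measurableT mf).
apply: ae_eq_integral => //.
- by apply: emeasurable_funM => //; exact: measurable_int intRN.
- exact: emeasurable_funM.
apply: ae_eqe_mul2l; apply: integral_ae_eq => // E _ mE.
by rewrite -Radon_Nikodym_SigmaFinite.f_integral.
Qed.

Lemma measurable_expR_mul_sqr (t : R) :
  measurable_fun [set: R] (fun x => (expR (t * x ^+ 2))%:E).
Proof. by apply/measurable_EFinP/measurableT_comp/measurable_funM. Qed.

Lemma integral_expR_mul_sqr_normal (t : R) : (t < 2^-1)%R ->
  \int[normal_prob 0 1]_x (expR (t * x ^+ 2))%:E = (Num.sqrt (1 - 2 * t)^-1)%:E.
Proof.
move=> t_lt; rewrite ge0_integral_normal_prob; last 2 first.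
- by move=> x; rewrite lee_fin expR_ge0.
- exact: measurable_expR_mul_sqr.
under eq_integral do rewrite -EFinM expR_mul_sqr_normal_pdf // EFinM.
rewrite ge0_integralZl //; first by rewrite integral_normal_pdf mule1.
- by apply/measurable_EFinP; exact: measurable_normal_pdf.
- by move=> x _; rewrite lee_fin normal_pdf_ge0.
Qed.

End normal_gaussian_moment.

Lemma le_integral_expR_mul_sqr {d} {T : measurableType d} {R : realType}
    (mu : {measure set T -> \bar R}) (X : T -> R) (t1 t2 : R) :
  measurable_fun [set: T] X -> t1 <= t2 ->
  (\int[mu]_w (expR (t1 * X w ^+ 2))%:E <= \int[mu]_w (expR (t2 * X w ^+ 2))%:E)%E.
Proof.
move=> mX t12; apply: ge0_le_integral => //.
all: try by move=> w _; rewrite lee_fin expR_ge0.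
- exact: (measurableT_comp (measurable_expR_mul_sqr t1) mX).
- exact: (measurableT_comp (measurable_expR_mul_sqr t2) mX).
- by move=> w _; rewrite lee_fin ler_expR ler_wpM2r // sqr_ge0.
Qed.

Section standard_normal_rv.
Context d (T : measurableType d) (R : realType) (P : probability T R).
Local Open Scope ereal_scope.

(* [distribution P G] and [normal_prob] live on two different measurable
   structures on [R]; the identity between them transfers integrals. *)
Let idR : measurableTypeR R -> R := idfun.
#[local] HB.instance Definition _ :=
  @isMeasurableFun.Build _ _ _ _ idR (@measurable_id _ _ setT).

Lemma ge0_integral_standard_normal (G : {RV P >-> R}) (f : R -> \bar R) :
  is_standard_normal G -> measurable_fun [set: R] f -> (forall x, 0 <= f x) ->
  \int[P]_w f (G w) = \int[normal_prob 0 1]_x f x.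
Proof.
move=> hG mf f0; rewrite -(ge0_integral_distribution G mf f0).
transitivity (\int[distribution (normal_prob 0 1)
                (idR : {RV normal_prob (0 : R) 1 >-> R})]_x f x).
  by apply: eq_measure_integral => A mA _; exact: hG.
exact: (ge0_integral_distribution idR mf f0).
Qed.

Lemma integral_expR_mul_sqr_standard_normal (G : {RV P >-> R}) (t : R) :
  is_standard_normal G -> (t < 2^-1)%R ->
  \int[P]_w (expR (t * G w ^+ 2))%:E = (Num.sqrt (1 - 2 * t)^-1)%:E.
Proof.
move=> hG t_lt.
rewrite (ge0_integral_standard_normal G _ hG (measurable_expR_mul_sqr t)).
  exact: integral_expR_mul_sqr_normal.
by move=> x; rewrite lee_fin expR_ge0.
Qed.

Lemma integral_expR_mul_sqr_standard_normal_le2 (G : {RV P >-> R}) (t : R) :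
  is_standard_normal G ->
  \int[P]_w (expR (t * G w ^+ 2))%:E <= 2%:E <-> (t <= 3 / 8)%R.
Proof.
move=> hG; split => [int_le|t_le]; last first.
  have t_lt : (t < 2^-1)%R by lra.
  by rewrite integral_expR_mul_sqr_standard_normal // lee_fin sqrtr_inv_1B2M_le2.
rewrite leNgt; apply/negP => t_gt.
(* The closed form fails for t >= 1/2, so compare with some t' in (3/8, 1/2). *)
set t' := Num.min t (7 / 16)%R.
have t't : (t' <= t)%R by rewrite ge_min lexx.
have t'_gt : (3 / 8 < t')%R by rewrite lt_min t_gt /=; lra.
have t'_lt : (t' < 2^-1)%R by rewrite gt_min; apply/orP; right; lra.
have := le_trans (le_integral_expR_mul_sqr P _ _ _ (measurable_funPT G) t't) int_le.
rewrite integral_expR_mul_sqr_standard_normal // lee_fin sqrtr_inv_1B2M_le2 //.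
lra.
Qed.

Lemma expectation_expR_sgr_powR_div (X : T -> R) (alpha K : R) :
  (0 < alpha)%R -> (0 < K)%R ->
  'E_P[(fun w => expR (`|Num.sg (X w) * `|X w| `^ (2 / alpha) / K| `^ alpha))%R] =
  \int[P]_w (expR ((K `^ alpha)^-1 * X w ^+ 2))%:E.
Proof.
move=> alpha_gt0 K_gt0; rewrite unlock.
by under eq_integral do rewrite normr_sgr_powR_div_powR //.
Qed.

End standard_normal_rv.

Theorem mainTheorem4 (d : measure_display) (T : measurableType d) (R : realType)
  (P : probability T R) (G : {RV P >-> R}) (alpha : R) :
  0 < alpha ->
  is_standard_normal G ->
  psi_norm P alpha (fun w => Num.sg (G w) * `|G w| `^ (2 / alpha)) =
  ((8 / 3) `^ (1 / alpha))%:E.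
Proof.
move=> alpha_gt0 hG; set c := (8 / 3) `^ (1 / alpha).
have c_gt0 : 0 < c by rewrite powR_gt0.
have c_alpha : c `^ alpha = 8 / 3.
  by rewrite -powRrM mulrC divfK ?gt_eqF // powRr1.
have admissibleE K : 0 < K ->
    ('E_P[(fun w => expR (`|Num.sg (G w) * `|G w| `^ (2 / alpha) / K| `^ alpha))%R]
     <= 2%:E)%E <-> c <= K.
  move=> K_gt0; rewrite expectation_expR_sgr_powR_div //.
  rewrite integral_expR_mul_sqr_standard_normal_le2 //.
  rewrite invf_ple ?posrE ?powR_gt0 // invf_div -c_alpha.
  by rewrite (le_mono_in (gt0_ltr_powR alpha_gt0)) // nnegrE ltW.
rewrite /psi_norm; apply/eqP; rewrite eq_le; apply/andP; split.
  by apply: ereal_inf_lbound; exists c => //; split => //; apply/admissibleE.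
by apply/ereal_infP => _ [K [K_gt0 /(admissibleE K K_gt0) cK] <-]; rewrite lee_fin.
Qed.
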